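(* For all integers $n\ge k\ge 2$, $$(\lceil \log (k+1)\rceil+1)\left\lfloor \frac{n}{4k}\right\rfloor \le \gamma_{\rm i}(P_n^k)\le \frac{\lceil \log(k+1)\rceil+2}{2k+2}\,n+\lceil\log(k+1)\rceil+2,$$ where $\log$ is the logarithm of base $2$. In particular, $\gamma_{\rm i}(P_n^k)=\Theta\!\left(\frac{\log k}{k}\,n\right)$ as $n\to\infty$.
   Context: $P_n$ is the path on $n$ vertices. The $k$-th power $G^k$ of a graph $G$ has vertex set $V(G)$, with $uv$ an edge iff $1\le d_G(u,v)\le k$. Indicated domination game on a graph $G$: two players, Dominator and Staller, alternate. In each round Dominator indicates a vertex $v$ not yet dominated by the vertices previously selected by Staller (a vertex dominates itself and its neighbors), and Staller must select a vertex of the closed neighborhood $N[v]$, adding it to a set $D$. The game ends when $D$ is a dominating set of $G$. Dominator wants to minimize $|D|$ and Staller to maximize it; the size of $D$ under optimal play of both is the indicated domination number $\gamma_{\rm i}(G)$. *)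

From mathcomp Require Import all_boot all_order all_algebra.
Set Implicit Arguments. Unset Strict Implicit. Unset Printing Implicit Defensive.

Section Game.
Variables (T : finType) (adj : rel T).

Definition cnbhd (v : T) : {set T} := [set u | (u == v) || adj v u].

Definition dominated (D : {set T}) (v : T) : bool := [exists u in D, v \in cnbhd u].

Definition dominatingb (D : {set T}) : bool := [forall v, dominated D v].

(* Value of the indicated domination game from position D (the set of vertices
   selected so far by Staller), with [fuel] an upper bound on the number of
   remaining moves: Dominator (min) indicates an undominated vertex v, Staller
   (max) selects u in N[v]; each move adds a new vertex to D, so #|T| fuel is
   always enough. *)
Fixpoint igame (fuel : nat) (D : {set T}) : nat :=
  match fuel with
  | 0 => 0
  | f.+1 =>
      if dominatingb D then 0
      else \big[minn/#|T|]_(v | ~~ dominated D v)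
             \max_(u in cnbhd v) (igame f (u |: D)).+1
  end.

Definition gamma_i : nat := igame #|T| set0.
End Game.

(* k-th power of the path P_n: vertices 0..n-1, distance in P_n is |i - j|,
   so i ~ j iff 1 <= |i - j| <= k. *)
Definition pathpow_adj (n k : nat) : rel 'I_n :=
  fun i j => (0 < (i - j) + (j - i)) && ((i - j) + (j - i) <= k).
Arguments pathpow_adj : clear implicits.
Arguments gamma_i : clear implicits.

From mathcomp Require Import all_boot all_order all_algebra.
From mathcomp Require Import zify.
Set Implicit Arguments. Unset Strict Implicit. Unset Printing Implicit Defensive.

(* Let L = up_log 2 (k+1).
   Upper bound: Dominator always indicates the rightmost undominated vertex
   within distance k of the leftmost one, x.  Whatever Staller selects, all
   vertices up to the selected one plus k are then dominated except an
   interval of length at most k, which Dominator clears by binary search in at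
   most L moves.  Such a round advances x by at least k + 1 using one move,
   or by at least 2k + 2 using at most L + 1 moves, whence the rate
   (L + 2) / (2k + 2).
   Lower bound: cut the path into n / 4k blocks of length 4k.  Staller keeps
   an undominated interval in the middle half of each block and answers every
   indication so that only the interval of the indicated block is touched, and
   at most halved.  The potential, the sum of up_log 2 (length + 1) over the
   blocks, thus drops by at most one per move, and it starts at L + 1 per
   block. *)

Lemma bigminn_inf (I : finType) (P : pred I) (F : I -> nat) x j m :
  P j -> F j <= m -> \big[minn/x]_(i | P i) F i <= m.
Proof. by move=> Pj; rewrite -minEnat -leEnat; apply: Order.TotalTheory.bigmin_inf. Qed.

Lemma leq_bigminn (I : finType) (P : pred I) (F : I -> nat) x m :
  m <= x -> (forall i, P i -> m <= F i) -> m <= \big[minn/x]_(i | P i) F i.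
Proof. by rewrite -minEnat -leEnat; apply: Order.POrderTheory.le_bigmin. Qed.

Lemma up_log2_halve w w' : w <= w'.*2.+1 -> up_log 2 w.+1 <= (up_log 2 w'.+1).+1.
Proof.
move=> le_w; apply: up_log_min => //; rewrite expnS.
by have := @up_logP 2 w'.+1 isT; lia.
Qed.

Lemma leq_sum_indicator t j (F G : nat -> nat) :
  (forall i, i < t -> F i <= G i + (i == j)) ->
  \sum_(i < t) F i <= \sum_(i < t) G i + 1.
Proof.
move=> le_FG; apply: (@leq_trans (\sum_(i < t) (G i + (i == j :> nat)))).
  by apply: leq_sum => i _; apply: le_FG.
rewrite big_split leq_add2l /=; have [lt_jt|le_tj] := ltnP j t.
  rewrite (bigD1 (Ordinal lt_jt)) //= eqxx big1 // => i ne_ij.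
  by apply/eqP; rewrite eqb0; apply: contra ne_ij => /eqP eq_ij; apply/eqP/val_inj.
by rewrite big1 // => i _; apply/eqP; rewrite eqb0 neq_ltn (leq_trans (ltn_ord i) le_tj).
Qed.

Section IndicatedGame.
Variables (T : finType) (adj : rel T).
Hypothesis adj_sym : symmetric adj.
Implicit Types (D : {set T}) (u v : T).

Definition game_val D : nat := igame adj #|T| D.

Lemma cnbhd_refl v : v \in cnbhd adj v.
Proof. by rewrite inE eqxx. Qed.

Lemma mem_cnbhdC u v : (u \in cnbhd adj v) = (v \in cnbhd adj u).
Proof. by rewrite !inE eq_sym adj_sym. Qed.

Lemma cnbhd_undominated_notin D u v :
  ~~ dominated adj D v -> u \in cnbhd adj v -> u \notin D.
Proof. by move=> /existsPn/(_ u) + uv; rewrite -mem_cnbhdC uv andbT. Qed.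

Lemma cardsC_setU1 D u : u \notin D -> #|~: D| = #|~: (u |: D)|.+1.
Proof. by move=> uD; have := cardsC D; have := cardsC (u |: D); rewrite cardsU1 uD; lia. Qed.

Lemma dominating_cardsC0 D : #|~: D| = 0 -> dominatingb adj D.
Proof.
move/eqP; rewrite cards_eq0 => /eqP DT; apply/forallP => v; apply/existsP; exists v.
have : v \notin ~: D by rewrite DT inE.
by rewrite inE negbK cnbhd_refl andbT.
Qed.

Lemma igame_le f D : igame adj f D <= f.
Proof.
elim: f D => [|f IH] D //=; case: ifP => // /negbT /forallPn [v nv].
apply: (@bigminn_inf _ _ _ _ v) => //.
by apply/bigmax_leqP => u _; rewrite ltnS.
Qed.

Lemma igame_fuel f1 f2 D : #|~: D| <= f1 -> #|~: D| <= f2 ->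
  igame adj f1 D = igame adj f2 D.
Proof.
elim: f1 f2 D => [|f1 IH] [|f2] D le1 le2 //=;
  try by rewrite dominating_cardsC0 //; lia.
case: ifP => // _; apply: eq_bigr => v nv; apply: eq_bigr => u uv.
have := cardsC_setU1 (cnbhd_undominated_notin nv uv).
by move=> cardDu; congr S; apply: IH; lia.
Qed.

Lemma game_val_leq D : game_val D <= #|~: D|.
Proof. by rewrite /game_val (@igame_fuel _ #|~: D|) ?igame_le // -(cardsC D) leq_addl. Qed.

Lemma game_val_dominating D : dominatingb adj D -> game_val D = 0.
Proof. by rewrite /game_val; case: #|T| => //= f ->. Qed.

Lemma game_valE D : ~~ dominatingb adj D ->
  game_val D = \big[minn/#|T|]_(v | ~~ dominated adj D v)
                 \max_(u in cnbhd adj v) (game_val (u |: D)).+1.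
Proof.
move=> ndomD; have cardD : 0 < #|~: D|.
  by rewrite lt0n; apply: contra ndomD => /eqP/dominating_cardsC0.
have := cardsC D; rewrite /game_val; case cardT: #|T| => [|f]; first lia.
move=> cardDT; rewrite [LHS]/= (negbTE ndomD) cardT; apply: eq_bigr => v nv; apply: eq_bigr => u uv.
have := cardsC_setU1 (cnbhd_undominated_notin nv uv).
by move=> cardDu; congr S; apply: igame_fuel; lia.
Qed.

Lemma game_val_le_reply D v : ~~ dominated adj D v ->
  exists2 u, u \in cnbhd adj v & game_val D <= (game_val (u |: D)).+1.
Proof.
move=> nv; have ndomD : ~~ dominatingb adj D by apply/forallPn; exists v.
exists [arg max_(u > v in cnbhd adj v) (game_val (u |: D)).+1].
  by case: arg_maxnP => //; rewrite cnbhd_refl.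
rewrite game_valE //; apply: (@bigminn_inf _ _ _ _ v) => //.
by rewrite (bigmax_eq_arg v) ?cnbhd_refl.
Qed.

Lemma game_val_ge_strategy D c : ~~ dominatingb adj D ->
  (forall v, ~~ dominated adj D v ->
     exists2 u, u \in cnbhd adj v & c <= (game_val (u |: D)).+1) ->
  c <= game_val D.
Proof.
move=> ndomD reply; rewrite game_valE //; apply: leq_bigminn => [|v nv].
  have [v0 nv0] := forallPn ndomD; have [u uv le_c] := reply v0 nv0.
  have := game_val_leq (u |: D); have := cardsC D.
  by rewrite (cardsC_setU1 (cnbhd_undominated_notin nv0 uv)) in le_c *; lia.
have [u uv le_c] := reply v nv.
by apply: leq_trans le_c _; apply: leq_bigmax_cond.
Qed.

End IndicatedGame.

Section PathPower.
Variables n k : nat.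
Hypothesis k_gt0 : 0 < k.
Local Notation adj := (pathpow_adj n k).
Local Notation game := (game_val adj).

Definition dist (u v : nat) := (u - v) + (v - u).

Definition covered (D : {set 'I_n}) (x : nat) := [exists w in D, dist w x <= k].

Lemma pathpow_adj_sym : symmetric adj.
Proof. by move=> i j; rewrite /pathpow_adj addnC. Qed.

Lemma pathpow_cnbhdE (u v : 'I_n) : (v \in cnbhd adj u) = (dist u v <= k).
Proof.
rewrite inE /pathpow_adj /dist -(inj_eq val_inj); case: u v => [u ?] [v ?] /=.
case: (eqVneq v u) => [->|/eqP neq_vu] /=; first by rewrite !subnn.
by apply/andP/idP => [[]|le_k] //; split => //; lia.
Qed.

Lemma dominated_coveredE D (v : 'I_n) : dominated adj D v = covered D v.
Proof. by apply: eq_existsb => w; rewrite pathpow_cnbhdE. Qed.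

Lemma coveredU1 D (u : 'I_n) x : covered (u |: D) x = (dist u x <= k) || covered D x.
Proof.
apply/existsP/orP => [[w /andP[]]|[ux|/existsP[w /andP[wD wx]]]].
- by rewrite in_setU1 => /orP[/eqP-> ->|wD wx]; [left | right; apply/existsP; exists w; rewrite wD].
- by exists u; rewrite setU11.
- by exists w; rewrite in_setU1 wD orbT.
Qed.

Lemma covered_notin D (u v : 'I_n) : ~~ covered D v -> dist u v <= k -> u \notin D.
Proof.
rewrite -dominated_coveredE -pathpow_cnbhdE -(mem_cnbhdC pathpow_adj_sym).
move=> nv uv; exact: (cnbhd_undominated_notin pathpow_adj_sym nv uv).
Qed.

Lemma game_covered D : (forall x, x < n -> covered D x) -> game D = 0.
Proof.
move=> cov; apply: game_val_dominating; apply/forallP => v.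
by rewrite dominated_coveredE; apply: cov.
Qed.

Lemma game_le_reply D v : v < n -> ~~ covered D v ->
  exists u : 'I_n, dist u v <= k /\ game D <= (game (u |: D)).+1.
Proof.
move=> lt_vn nv; have nv' : ~~ dominated adj D (Ordinal lt_vn) by rewrite dominated_coveredE.
have [u] := game_val_le_reply pathpow_adj_sym nv'.
by rewrite pathpow_cnbhdE /dist addnC => uv le_game; exists u.
Qed.

Lemma game_ge_strategy D c x : x < n -> ~~ covered D x ->
  (forall v : 'I_n, ~~ covered D v ->
     exists u : 'I_n, dist u v <= k /\ c <= (game (u |: D)).+1) ->
  c <= game D.
Proof.
move=> lt_xn nx reply; apply: (game_val_ge_strategy pathpow_adj_sym) => [|v].
  by apply/forallPn; exists (Ordinal lt_xn); rewrite dominated_coveredE.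
rewrite dominated_coveredE => /reply[u [uv le_c]]; exists u => //.
by rewrite pathpow_cnbhdE /dist addnC.
Qed.

Definition uncovered_within D y a g :=
  forall x, x < y -> ~~ covered D x -> a <= x < a + g.

Lemma uncovered_between D a m b : a <= m <= b -> b - a <= k ->
  ~~ covered D a -> ~~ covered D b -> ~~ covered D m.
Proof.
move=> /andP[le_am le_mb] le_bak na nb; apply/existsP => -[w /andP[wD]].
rewrite /dist => wm; case: (leqP m w) => [le_mw|lt_wm].
- by case/existsP: nb; exists w; rewrite wD /dist; lia.
- by case/existsP: na; exists w; rewrite wD /dist; lia.
Qed.

Lemma halve_gap D y a g : y <= n -> g <= k -> uncovered_within D y a g ->
  (exists2 x, x < y & ~~ covered D x) ->
  exists (u : 'I_n) a' g', [/\ game D <= (game (u |: D)).+1, g'.*2 <= g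
                            & uncovered_within (u |: D) y a' g'].
Proof.
move=> le_yn le_gk within [x0 lt_x0 nx0].
pose P x := (x < y) && ~~ covered D x.
have exP : exists x, P x by exists x0; rewrite /P lt_x0.
have ubP x : P x -> x <= y by case/andP=> /ltnW.
have [lo /andP[lt_lo nlo] min_lo] := ex_minnP exP.
have [hi /andP[lt_hi nhi] max_hi] := ex_maxnP exP ubP.
have := within lo lt_lo nlo; have := within hi lt_hi nhi; have := max_hi lo.
rewrite /P lt_lo nlo => /(_ isT) le_lohi range_hi range_lo.
pose m := lo + (hi - lo) %/ 2.
have lt_mn : m < n by lia.
have nm : ~~ covered D m by apply: (uncovered_between (a := lo) (b := hi)) => //; lia.
have [u [um le_game]] := game_le_reply lt_mn nm.
have range x : x < y -> ~~ covered D x -> lo <= x <= hi.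
  by move=> lt_x nx; rewrite min_lo ?max_hi // /P lt_x nx.
(* Staller's answer, at distance at most k from m, dominates the half of
   [lo, hi] on its side of m. *)
exists u; case: (leqP m u) => [le_mu|lt_um].
- exists lo, ((hi - lo) %/ 2); split => //; first lia.
  move=> x lt_x; rewrite coveredU1 negb_or => /andP[ux /(range x lt_x)].
  by move: ux um; rewrite /dist; lia.
- exists m.+1, (hi - m); split => //; first lia.
  move=> x lt_x; rewrite coveredU1 negb_or => /andP[ux /(range x lt_x)].
  by move: ux um; rewrite /dist; lia.
Qed.

Lemma finish_gap e D y a g : y <= n -> g <= k -> g < 2 ^ e ->
  uncovered_within D y a g ->
  exists D', (forall x, x < y -> covered D' x) /\ game D <= e + game D'.
Proof.
elim: e D a g => [|e IH] D a g le_yn le_gk lt_g within.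
  exists D; split => // x lt_x; case: (boolP (covered D x)) => // /(within x lt_x).
  by rewrite expn0 in lt_g; lia.
have [/existsP[x nx]|/existsPn cov] := boolP [exists x : 'I_y, ~~ covered D x].
  have [u [a' [g' [le_game le_g' within']]]] :=
    halve_gap le_yn le_gk within (ex_intro2 _ _ (val x) (ltn_ord x) nx).
  have [||D' [cov' le_game']] := IH (u |: D) a' g' le_yn _ _ within'.
  - lia.
  - by rewrite expnS in lt_g; lia.
  by exists D'; split => //; lia.
by exists D; split => [x lt_x|]; [have := cov (Ordinal lt_x); rewrite negbK | lia].
Qed.

Lemma uncovered_after_reply D x v (u : 'I_n) y :
  (forall z, z < x -> covered D z) ->
  (forall z, x <= z <= x + k -> z < y -> ~~ covered D z -> z <= v) ->
  dist u v <= k -> y <= (maxn (x + k) (u + k)).+1 ->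
  uncovered_within (u |: D) y x (u - k - x).
Proof.
move=> cov_x max_v uv le_y z lt_z; rewrite coveredU1 negb_or => /andP[uz nz].
have le_xz : x <= z by rewrite leqNgt; apply: contra nz => /cov_x.
have le_zv : x + k < z \/ z <= v.
  by case: (leqP z (x + k)) => [le_zxk|]; [right; apply: max_v; rewrite ?le_xz | left].
by move: uv uz; rewrite /dist; lia.
Qed.

Lemma dominator_round L D x : k < 2 ^ L -> x < n -> ~~ covered D x ->
  (forall z, z < x -> covered D z) ->
  exists D' y e, [/\ x < y <= n, forall z, z < y -> covered D' z, e <= L,
    game D <= (e + game D').+1 & y < n -> (2 * k + 2) * e.+1 <= (L + 2) * (y - x)].
Proof.
move=> lt_kL lt_xn nx cov_x.
pose P z := [&& x <= z, z <= x + k, z < n & ~~ covered D z].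
have exP : exists z, P z by exists x; rewrite /P leqnn leq_addr lt_xn.
have ubP z : P z -> z <= n by case/and4P=> _ _ /ltnW.
have [v /and4P[le_xv le_vxk lt_vn nv] max_v] := ex_maxnP exP ubP.
have [u [uv le_game]] := game_le_reply lt_vn nv.
pose y := minn n (maxn (x + k) (u + k)).+1.
pose e := if u - k - x == 0 then 0 else L.
have within : uncovered_within (u |: D) y x (u - k - x).
  apply: uncovered_after_reply cov_x _ uv _ => [z /andP[le_xz le_zxk]|]; last lia.
  by move=> lt_zy nz; apply: max_v; rewrite /P le_xz le_zxk nz andbT; lia.
have [||D' [cov' le_game']] := finish_gap (e := e) (geq_minl _ _) _ _ within.
- by move: uv; rewrite /dist; lia.
- by rewrite /e; case: eqP => [->|_] //; move: uv; rewrite /dist; lia.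
exists D', y, e; split => //; first lia.
- by rewrite /e; case: ifP.
- lia.
move=> lt_yn; have L2 : 2 <= L + 2 by rewrite leq_addl.
rewrite /e; case: eqP => [_|gap_pos].
- apply: leq_trans (leq_mul L2 (_ : k + 1 <= y - x)); lia.
- apply: leq_trans (leq_mul (leqnn (L + 2)) (_ : 2 * k + 2 <= y - x)); first lia.
  by move: uv; rewrite /dist; lia.
Qed.

Lemma dominator_potential L D x : k < 2 ^ L -> x <= n ->
  (forall z, z < x -> covered D z) ->
  (2 * k + 2) * game D <= (L + 2) * (n - x) + (2 * k + 2) * (L + 2).
Proof.
move=> lt_kL; have [r] := ubnP (n - x); elim: r D x => // r IH D x lt_r le_xn cov_x.
have [le_nx|lt_xn] := leqP n x.
  by rewrite game_covered ?muln0 // => z lt_zn; apply: cov_x; lia.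
case: (boolP (covered D x)) => [cx|nx].
  apply: leq_trans (IH D x.+1 _ lt_xn _) _; [lia | | ].
    by move=> z; rewrite ltnS leq_eqVlt => /orP[/eqP-> | /cov_x].
  by rewrite leq_add2r leq_mul2l subnS leq_pred orbT.
have [D' [y [e [/andP[lt_xy le_yn] cov' le_eL le_game bound]]]] :=
  dominator_round lt_kL lt_xn nx cov_x.
have le_scaled : (2 * k + 2) * game D <= (2 * k + 2) * e.+1 + (2 * k + 2) * game D'.
  by rewrite -mulnDr leq_mul2l addSn le_game orbT.
have [le_ny|lt_yn] := leqP n y.
  have game_D' : game D' = 0 by apply: game_covered => z lt_zn; apply: cov'; lia.
  rewrite game_D' muln0 addn0 in le_scaled.
  apply: leq_trans le_scaled (leq_trans _ (leq_addl _ _)).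
  by rewrite leq_mul2l; lia.
have lt_nyr : n - y < r by lia.
have := IH D' y lt_nyr (ltnW lt_yn) cov'; have := bound lt_yn.
have -> : (L + 2) * (n - x) = (L + 2) * (y - x) + (L + 2) * (n - y).
  by rewrite -mulnDr; congr (_ * _); lia.
lia.
Qed.

Lemma gamma_i_pathpow_upper L : k < 2 ^ L ->
  (2 * k + 2) * gamma_i 'I_n adj <= (L + 2) * n + (2 * k + 2) * (L + 2).
Proof.
by move=> lt_kL; have := dominator_potential (D := set0) lt_kL (leq0n n); rewrite subn0; apply.
Qed.

Lemma block_le i t : i < t -> 4 * k * i + 4 * k <= 4 * k * t.
Proof. by move=> lt_it; rewrite -mulnSr leq_mul2l lt_it orbT. Qed.

Lemma dist_blocks_gt i q u x : i != q -> 4 * k * q <= u < 4 * k * q + 4 * k ->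
  4 * k * i + k <= x < 4 * k * i + 3 * k -> k < dist u x.
Proof. by rewrite /dist neq_ltn => /orP[] /block_le; lia. Qed.

(* Near the ends of the block Staller answers with its border vertices,
   otherwise with v - k or v + k, whichever spares the larger part of [a, b). *)
Lemma reply_in_block c v a b : c <= v < c + 4 * k -> c + k <= a -> b <= c + 3 * k ->
  exists u, [/\ c <= u < c + 4 * k, dist u v <= k & exists A B,
    [/\ a <= A, B <= b, b - a <= (B - A).*2.+1 & forall x, A <= x < B -> k < dist u x]].
Proof.
rewrite /dist => /andP[le_cv lt_v] le_a le_b.
have [lt_vk|le_kv] := ltnP v (c + k).
  by exists c; split; [lia | lia | exists (maxn a (c + k).+1), b; split; lia].
have [le_v3k|lt_3kv] := leqP (c + 3 * k) v.
  by exists (c + 4 * k).-1; split; [lia | lia | exists a, (minn b (c + 3 * k).-1); split; lia].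
have [le_left|lt_right] := leqP (minn b v - a) (b - maxn a v.+1).
  by exists (v - k); split; [lia | lia | exists (maxn a v.+1), b; split; lia].
by exists (v + k); split; [lia | lia | exists a, (minn b v); split; lia].
Qed.

Lemma staller_reply t (a b : nat -> nat) (v : 'I_n) : 4 * k * t <= n ->
  (forall i, i < t -> 4 * k * i + k <= a i /\ b i <= 4 * k * i + 3 * k) ->
  exists (u : 'I_n) q A B, [/\ dist u v <= k,
    forall i x, i != q -> 4 * k * i + k <= x < 4 * k * i + 3 * k -> k < dist u x &
    q < t -> [/\ a q <= A, B <= b q, b q - a q <= (B - A).*2.+1
               & forall x, A <= x < B -> k < dist u x]].
Proof.
move=> le_tn blocks; pose q := v %/ (4 * k).
have v_in : 4 * k * q <= v < 4 * k * q + 4 * k.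
  have := divn_eq v (4 * k); have := @ltn_pmod v (4 * k) ltac:(lia).
  by rewrite -/q mulnC; lia.
have [lt_qt|le_tq] := ltnP q t; last first.
  (* v lies beyond all blocks, so Staller may select v itself. *)
  exists v, q, 0, 0; split; first by rewrite /dist subnn.
  - by move=> i x ne_iq; apply: dist_blocks_gt ne_iq v_in.
  - by rewrite ltnNge le_tq.
have [le_a le_b] := blocks q lt_qt.
have [u [u_in uv [A [B [le_aA le_Bb halve farAB]]]]] := reply_in_block v_in le_a le_b.
have lt_un : u < n by have := block_le lt_qt; lia.
exists (Ordinal lt_un), q, A, B; split => // i x ne_iq.
exact: dist_blocks_gt ne_iq u_in.
Qed.

(* Block i is [4ki, 4ki + 4k); Staller keeps [a i, b i), inside its middle
   half, undominated. *)
Definition staller_inv t D (a b : nat -> nat) := forall i, i < t ->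
  [/\ 4 * k * i + k <= a i, b i <= 4 * k * i + 3 * k
     & forall x, a i <= x < b i -> ~~ covered D x].

Lemma staller_inv_reply t D a b (v : 'I_n) : 4 * k * t <= n -> staller_inv t D a b ->
  exists (u : 'I_n) q (a' b' : nat -> nat), [/\ dist u v <= k, staller_inv t (u |: D) a' b'
    & forall i, i < t -> up_log 2 (b i - a i).+1 <= up_log 2 (b' i - a' i).+1 + (i == q)].
Proof.
move=> le_tn inv.
have blocks i : i < t -> 4 * k * i + k <= a i /\ b i <= 4 * k * i + 3 * k.
  by case/inv.
have [u [q [A [B [uv far near]]]]] := staller_reply v le_tn blocks.
exists u, q, (fun i => if i == q then A else a i), (fun i => if i == q then B else b i).
split=> // i lt_it; case: eqP => [eq_iq|/eqP ne_iq]; rewrite ?addn0 ?addn1 //.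
- subst i; have [le_aA le_Bb _ farAB] := near lt_it; have [le_a le_b unc] := inv q lt_it.
  split; [lia | lia | move=> x range].
  by rewrite coveredU1 negb_or -ltnNge farAB // unc //; lia.
- have [le_a le_b unc] := inv i lt_it; split => // x range.
  by rewrite coveredU1 negb_or -ltnNge unc // andbT; apply: far ne_iq _; lia.
- by subst i; have [_ _ halve _] := near lt_it; apply: up_log2_halve.
Qed.

Lemma staller_potential t D a b : 4 * k * t <= n -> staller_inv t D a b ->
  \sum_(i < t) up_log 2 (b i - a i).+1 <= game D.
Proof.
move=> le_tn; have [s] := ubnP #|~: D|; elim: s D a b => // s IH D a b lt_s inv.
have [/eqP-> //|] := boolP (\sum_(i < t) up_log 2 (b i - a i).+1 == 0).
rewrite sum_nat_eq0 => /forallPn[i0]; rewrite up_log_eq0 /= -ltnNge ltnS => lt_ab.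
have [le_a le_b unc] := inv i0 (ltn_ord i0).
have lt_an : a i0 < n by have := block_le (ltn_ord i0); lia.
apply: (game_ge_strategy lt_an (unc _ _)) => [|v nv]; first lia.
have [u [q [a' [b' [uv inv' le_terms]]]]] := staller_inv_reply v le_tn inv.
exists u; split => //.
apply: leq_trans (leq_sum_indicator le_terms) _; rewrite addn1 ltnS.
by apply: IH inv'; move: lt_s; rewrite (cardsC_setU1 (covered_notin nv uv)) ltnS.
Qed.

Lemma gamma_i_pathpow_lower :
  (up_log 2 k.+1).+1 * (n %/ (4 * k)) <= gamma_i 'I_n adj.
Proof.
pose t := n %/ (4 * k).
have le_tn : 4 * k * t <= n by rewrite mulnC leq_divM.
have inv0 : staller_inv t set0 (fun i => 4 * k * i + k) (fun i => 4 * k * i + 3 * k).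
  by move=> i _; split => // x _; apply/existsP => -[w]; rewrite inE.
apply: leq_trans (staller_potential le_tn inv0).
have -> : (up_log 2 k.+1).+1 * t = \sum_(i < t) (up_log 2 k.+1).+1.
  by rewrite sum_nat_const card_ord mulnC.
apply: leq_sum => i _; have -> : 4 * k * i + 3 * k - (4 * k * i + k) = k.*2 by lia.
by rewrite [up_log 2 k.*2.+1]up_log2S ?double_gt0 // doubleK.
Qed.

End PathPower.

Unset Implicit Arguments.
Import Order.TTheory GRing.Theory Num.Theory.

Theorem theorem6p1 (n k : nat) (hk : 2 <= k) (hkn : k <= n) :
  ((up_log 2 k.+1).+1 * (n %/ (4 * k)) <= gamma_i 'I_n (pathpow_adj n k))%N /\
  (((gamma_i 'I_n (pathpow_adj n k))%:R : rat) <=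
    ((up_log 2 k.+1 + 2)%:R / (2 * k + 2)%:R) * n%:R + (up_log 2 k.+1 + 2)%:R)%R.
Proof.
(* Neither bound needs [hkn]. *)
have k_gt0 : (0 < k)%N by lia.
split; first exact: gamma_i_pathpow_lower.
move: (gamma_i_pathpow_upper n k_gt0 (up_logP k.+1 (isT : 1 < 2))) => le_gamma.
have pos : (0 < (2 * k + 2)%:R :> rat)%R by rewrite ltr0n addn2.
rewrite -(ler_pM2l pos) mulrDr mulrA mulrCA divff ?gt_eqF // mulr1.
by rewrite -!natrM -natrD ler_nat.
Qed.
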